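(* (i) For every integer $m\ge1$ and every $n\ge0$, $$v_{2n+1}(x,m,s)=\sum_{k=0}^{n}(-1)^k\binom{2n+1}{2k+1}\frac{(m+2n-2k-1)!\,(2m+2n)!}{(m+2n)!\,(2m+2n-2k-1)!}\,\frac{T_{2k+1}}{2^{2k+1}}\,x^{2k+1}\,v_{2n-2k}(x,m,s).$$ (ii) For $m=0$ and every $n\ge 0$, $$v_{2n+1}(x,0,s)=\sum_{k=0}^{n-1}(-1)^k\binom{2n+1}{2k+1}\frac{T_{2k+1}}{2^{2k+1}}\,x^{2k+1}\,v_{2n-2k}(x,0,s)+(-1)^n\frac{T_{2n+1}}{2^{2n}}\,x^{2n+1}.$$
   Context: For an integer $m\ge0$ and indeterminates $x,s$, $v_0(x,m,s)=1$ and for $n\ge1$ $$v_n(x,m,s)=\sum_{k=0}^{\lfloor n/2\rfloor}(-1)^k\frac{n!}{k!\,(n-2k)!}\,\frac{(m+n-k-1)!}{(m+n-1)!}\,\frac{s^k}{2^{2k}}\,x^{n-2k}.$$ The tangent numbers $T_{2n+1}$ are defined by $\frac{e^z-e^{-z}}{e^z+e^{-z}}=\sum_{n\ge0}(-1)^n\frac{T_{2n+1}}{(2n+1)!}z^{2n+1}$ (so $T_1=1,T_3=2,T_5=16,\dots$). *)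

From HB Require Import structures.
From mathcomp Require Import all_boot all_order all_algebra.
Set Implicit Arguments. Unset Strict Implicit. Unset Printing Implicit Defensive.
Import Order.TTheory GRing.Theory Num.Theory.
Local Open Scope ring_scope.

Definition vpoly (R : fieldType) (n : nat) (x : R) (m : nat) (s : R) : R :=
  if n is 0 then 1 else
  \sum_(k < n./2.+1)
    (-1) ^+ k * ((n`!)%:R / ((k`!)%:R * ((n - 2 * k)`!)%:R))
      * (((m + n - k - 1)`!)%:R / ((m + n - 1)`!)%:R)
      * (s ^+ k / 2 ^+ (2 * k)) * x ^+ (n - 2 * k).

Definition cosh_coef (n : nat) : rat := if odd n then 0 else ((n`!)%:R)^-1.
Definition sinh_coef (n : nat) : rat := if odd n then ((n`!)%:R)^-1 else 0.

(* The formal power series sum_n (-1)^n T(2n+1)/(2n+1)! z^(2n+1), as a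
   coefficient sequence (T is indexed by the odd number 2n+1). *)
Definition tan_series (T : nat -> rat) (n : nat) : rat :=
  if odd n then (-1) ^+ n./2 * T n / (n`!)%:R else 0.

(* T are the tangent numbers: the series above equals
   (e^z - e^-z)/(e^z + e^-z) = sinh z / cosh z, i.e. (series) * cosh = sinh
   as formal power series (cosh has invertible constant term). *)
Definition tangent_numbers (T : nat -> rat) : Prop :=
  forall N : nat,
    \sum_(i < N.+1) tan_series T i * cosh_coef (N - i) = sinh_coef N.

From HB Require Import structures.
From mathcomp Require Import all_boot all_algebra.
From mathcomp Require Import ring zify.
Set Implicit Arguments. Unset Strict Implicit. Unset Printing Implicit Defensive.
Import GRing.Theory.
Local Open Scope ring_scope.

(* Expanding v_N = sum_j c_N(j) s^j x^(N-2j), both identities say, for each j,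
   that a_(2p+1) = sum_k tau_(2k+1) a_(2p-2k), where
   tau(z) = tanh(z/2) = sum_k (-1)^k T_(2k+1) (z/2)^(2k+1) / (2k+1)!  and a is
   (up to a factor independent of k) the coefficient sequence of Kummer's
   series 1F1(r+1; 2r+2; z) with r = m + j - 1, or of e^z + 1 when m = j = 0.
   Both series satisfy e^z A(-z) = A(z), so e^(-z/2) A(z) is even; then the odd
   part of A is tanh(z/2) times its even part, which is the recursion above. *)

(* MathComp makes [ratr] a ring morphism only into number fields; any field
   of characteristic 0 will do. *)
Section RatrPchar0.
Variable R : fieldType.
Hypothesis hchar : [pchar R] =i pred0.

Lemma intr_eq0_pchar0 (z : int) : (z%:~R == 0 :> R) = (z == 0).
Proof.
by case: z => n; rewrite ?NegzE ?mulrNz ?oppr_eq0 -?pmulrn (pcharf0P _).1.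
Qed.

Lemma ratr_frac (q : rat) (a b : int) : b != 0 -> q = a%:~R / b%:~R ->
  ratr q = a%:~R / b%:~R :> R.
Proof.
move=> b0 ->; set r := a%:~R / b%:~R : rat.
have hb : b%:~R != 0 :> R by rewrite intr_eq0_pchar0.
have hd : (denq r)%:~R != 0 :> R by rewrite intr_eq0_pchar0 denq_neq0.
have cross : numq r * b = a * denq r.
  apply: (@intr_inj rat); rewrite !rmorphM /= numqE /r.
  by field; rewrite intr_eq0 b0.
rewrite /ratr; apply/eqP; rewrite eqr_div //.
by rewrite -!rmorphM /= cross.
Qed.

Lemma ratr_is_zmod_morphism_pchar0 : zmod_morphism (@ratr R).
Proof.
move=> x y.
rewrite [LHS](@ratr_frac _ (numq x * denq y - numq y * denq x) (denq x * denq y)).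
- rewrite /ratr !rmorphB !rmorphM /=; field.
  by rewrite !intr_eq0_pchar0 !denq_neq0.
- by rewrite mulf_neq0 ?denq_neq0.
rewrite !rmorphB !rmorphM /= -{1}(divq_num_den x) -{1}(divq_num_den y); field.
by rewrite !intr_eq0 !denq_neq0.
Qed.

Lemma ratr_is_monoid_morphism_pchar0 : monoid_morphism (@ratr R).
Proof.
split; first by rewrite /ratr divr1.
move=> x y; rewrite [LHS](@ratr_frac _ (numq x * numq y) (denq x * denq y)).
- rewrite /ratr !rmorphM /=; field.
  by rewrite !intr_eq0_pchar0 !denq_neq0.
- by rewrite mulf_neq0 ?denq_neq0.
rewrite !rmorphM /= -{1}(divq_num_den x) -{1}(divq_num_den y); field.
by rewrite !intr_eq0 !denq_neq0.
Qed.

Definition ratr_pchar0 : {rmorphism rat -> R} :=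
  HB.pack (@ratr R)
    (GRing.isZmodMorphism.Build rat R (@ratr R) ratr_is_zmod_morphism_pchar0)
    (GRing.isMonoidMorphism.Build rat R (@ratr R) ratr_is_monoid_morphism_pchar0).

End RatrPchar0.

Section PowerSeries.
Variable R : fieldType.
Implicit Types f g h M : nat -> R.

Definition conv f g (n : nat) : R := \sum_(i < n.+1) f i * g (n - i)%N.

Lemma conv_coefM f g N n : (n < N)%N ->
  conv f g n = (\poly_(i < N) f i * \poly_(i < N) g i)`_n.
Proof.
move=> ltnN; rewrite coefM; apply: eq_bigr => i _; rewrite !coef_poly.
rewrite (leq_ltn_trans _ ltnN) ?(leq_ltn_trans (leq_subr i n) ltnN) //.
by rewrite -ltnS.
Qed.

Lemma coefMl_trunc (p q r : {poly R}) N n :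
  (forall i, (i < N)%N -> p`_i = q`_i) -> (n < N)%N -> (p * r)`_n = (q * r)`_n.
Proof.
move=> epq ltnN; rewrite !coefM; apply: eq_bigr => i _; rewrite epq //.
by apply: leq_ltn_trans ltnN; rewrite -ltnS.
Qed.

Lemma eq_conv f f' g g' n :
  f =1 f' -> g =1 g' -> conv f g n = conv f' g' n.
Proof. by move=> ef eg; apply: eq_bigr => i _; rewrite ef eg. Qed.

Lemma convC f g n : conv f g n = conv g f n.
Proof. by rewrite (conv_coefM _ _ (ltnSn n)) mulrC -conv_coefM. Qed.

Lemma convA f g h n : conv (conv f g) h n = conv f (conv g h) n.
Proof.
pose P (u : nat -> R) := \poly_(i < n.+1) u i.
have truncP u v i : (i < n.+1)%N -> (P (conv u v))`_i = (P u * P v)`_i.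
  by move=> ltin; rewrite coef_poly ltin (conv_coefM _ _ ltin).
rewrite (conv_coefM _ _ (ltnSn n)) (coefMl_trunc _ (truncP f g)) //.
rewrite [RHS](conv_coefM _ _ (ltnSn n)) [in RHS]mulrC (coefMl_trunc _ (truncP g h)) //.
by rewrite -mulrA mulrC.
Qed.

Lemma convDr f g h n :
  conv f (fun k => g k + h k) n = conv f g n + conv f h n.
Proof. by rewrite /conv -big_split; apply: eq_bigr => i _; rewrite mulrDr. Qed.

Definition delta (n : nat) : R := (n == 0)%N%:R.

Lemma conv_delta f n : conv f delta n = f n.
Proof.
rewrite /conv big_ord_recr /= subnn mulr1 big1 ?add0r // => i _.
by rewrite /delta subn_eq0 leqNgt ltn_ord mulr0.
Qed.

Definition dilate (c : R) f (n : nat) : R := c ^+ n * f n.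

Lemma conv_dilate c f g n : conv (dilate c f) (dilate c g) n = dilate c (conv f g) n.
Proof.
rewrite /conv /dilate mulr_sumr; apply: eq_bigr => i _.
by rewrite mulrACA -exprD subnKC // -ltnS.
Qed.

Definition has_parity (b : bool) f := forall n, odd n != b -> f n = 0.

Lemma conv_parity b1 b2 f g :
  has_parity b1 f -> has_parity b2 g -> has_parity (b1 (+) b2) (conv f g).
Proof.
move=> pf pg n oddn; apply: big1 => i _.
have lein : (i <= n)%N by rewrite -ltnS.
have [oi|] := eqVneq (odd i) b1; last by move/pf->; rewrite mul0r.
have [oni|] := eqVneq (odd (n - i)) b2; last by move/pg->; rewrite mulr0.
by move: oddn; rewrite -{1}(subnKC lein) oddD oi oni eqxx.
Qed.

Lemma sum_ord_double (F : nat -> R) p :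
  \sum_(i < (2 * p).+2) F i = \sum_(k < p.+1) (F (2 * k)%N + F (2 * k).+1).
Proof.
elim: p => [|p IHp]; first by rewrite !big_ord_recr !big_ord0 /= !add0r.
rewrite [RHS]big_ord_recr -IHp mulnS !addSn add0n.
by rewrite [LHS]big_ord_recr [in LHS]big_ord_recr /= addrA.
Qed.

Lemma conv_oddl f M p : has_parity true f ->
  conv f M (2 * p).+1 = \sum_(k < p.+1) f (2 * k).+1 * M (2 * (p - k))%N.
Proof.
move=> odd_f; rewrite /conv (sum_ord_double (fun i => f i * M ((2 * p).+1 - i)%N)).
apply: eq_bigr => k _.
rewrite odd_f ?mul0r ?add0r; last by rewrite mul2n odd_double.
by rewrite subSS mulnBr.
Qed.

Hypothesis hchar : [pchar R] =i pred0.

Lemma natr_fact_neq0 n : (n`!)%:R != 0 :> R.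
Proof. by rewrite (pcharf0P _).1 // -lt0n fact_gt0. Qed.

Lemma two_neq0 : 2 != 0 :> R.
Proof. by rewrite (pcharf0P _).1. Qed.

Lemma natr_bin n i : (i <= n)%N ->
  ('C(n, i))%:R = (n`!)%:R / ((i`!)%:R * ((n - i)`!)%:R) :> R.
Proof.
move=> lein; rewrite -(bin_fact lein) !natrM mulfK //.
by rewrite mulf_neq0 ?natr_fact_neq0.
Qed.

Definition exp_seq (c : R) (n : nat) : R := c ^+ n / (n`!)%:R.

Lemma conv_exp_seq a b n : conv (exp_seq a) (exp_seq b) n = exp_seq (a + b) n.
Proof.
rewrite /exp_seq addrC exprDn mulr_suml; apply: eq_bigr => i _.
have lein : (i <= n)%N by rewrite -ltnS.
rewrite -[_ *+ 'C(n, i)]mulr_natr (natr_bin lein); field.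
by rewrite !natr_fact_neq0.
Qed.

Lemma exp_seq0 : exp_seq 0 =1 delta.
Proof. by case=> [|n]; rewrite /exp_seq /delta ?divr1 // expr0n mul0r. Qed.

Lemma dilate_exp_seq c d : dilate c (exp_seq d) =1 exp_seq (c * d).
Proof. by move=> n; rewrite /dilate /exp_seq exprMn mulrA. Qed.

(* [M] is the coefficient sequence of a series with e^z M(-z) = M(z). *)
Definition exp_symmetric M := forall n, conv (dilate (-1) M) (exp_seq 1) n = M n.

Lemma exp_symmetric_even M :
  exp_symmetric M -> has_parity false (conv M (exp_seq (- 2^-1))).
Proof.
move=> symM.
set F := conv M (exp_seq (- 2^-1)).
have FN n : dilate (-1) F n = F n.
  rewrite -conv_dilate.
  transitivity (conv (dilate (-1) M) (exp_seq (2^-1)) n).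
    by apply: eq_conv => // j; rewrite dilate_exp_seq mulN1r opprK.
  transitivity (conv (dilate (-1) M) (conv (exp_seq 1) (exp_seq (- 2^-1))) n).
    apply: eq_conv => // j; rewrite conv_exp_seq; congr exp_seq.
    by field; rewrite two_neq0.
  by rewrite -convA; apply: eq_conv.
move=> n; rewrite eqbF_neg negbK => oddn; apply/eqP.
have := FN n; rewrite /dilate -signr_odd oddn expr1 mulN1r => /eqP.
by rewrite eq_sym -subr_eq0 opprK -mulr2n -mulr_natr mulf_eq0 (negbTE two_neq0) orbF.
Qed.

Section TanhHalf.
Variables tau ch sh : nat -> R.
Hypotheses (odd_tau : has_parity true tau) (even_ch : has_parity false ch)
  (odd_sh : has_parity true sh).
Hypothesis exp_half_split : forall n, exp_seq (2^-1) n = ch n + sh n.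
Hypothesis tau_ch : forall n, conv tau ch n = sh n.

(* With F := e^(-z/2) M even, M = F ch + F sh splits M into its even and odd
   parts, and the odd part F sh = tau (F ch) is tau times the even part. *)
Lemma exp_symmetric_odd_coef M : exp_symmetric M ->
  forall p, M (2 * p).+1 = \sum_(k < p.+1) tau (2 * k).+1 * M (2 * (p - k))%N.
Proof.
move=> symM p; rewrite -conv_oddl //.
have oddn : odd (2 * p).+1 by rewrite /= mul2n odd_double.
set n := (2 * p).+1 in oddn *.
set F := conv M (exp_seq (- 2^-1)).
have even_F : has_parity false F by apply: exp_symmetric_even.
have M_split k : M k = conv F ch k + conv F sh k.
  rewrite -convDr -(eq_conv _ (fun=> erefl) exp_half_split) /F convA.
  rewrite -[LHS]conv_delta; apply: eq_conv => // j.
  by rewrite conv_exp_seq addNr exp_seq0.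
have even_Fch : has_parity false (conv F ch) := conv_parity even_F even_ch.
have even_tauFsh : has_parity false (conv tau (conv F sh)).
  exact: conv_parity odd_tau (conv_parity even_F odd_sh).
rewrite (eq_conv _ (fun=> erefl) M_split) convDr even_tauFsh ?oddn // addr0.
rewrite M_split even_Fch ?oddn // add0r.
rewrite (eq_conv _ (fun=> erefl) (fun k => convC F ch k)) -convA convC.
by apply: eq_conv.
Qed.

End TanhHalf.

End PowerSeries.

Section KummerSeries.
Variable R : fieldType.
Hypothesis hchar : [pchar R] =i pred0.

(* Euler's beta integral B(a+1, c+1) *)
Definition beta_nat (a c : nat) : R := (a`!)%:R * (c`!)%:R / (((a + c).+1)`!)%:R.

Lemma beta_natSl a c : beta_nat a c - beta_nat a.+1 c = beta_nat a c.+1.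
Proof.
have natrS_neq0 k : k.+1%:R != 0 :> R by rewrite (pcharf0P _).1.
have := natrS_neq0 (a + c).+1; have := natrS_neq0 (a + c).
rewrite /beta_nat addnS addSn !factS -[(a + c).+2]addn2 -[(a + c).+1]addn1.
rewrite -[c.+1]addn1 -[a.+1]addn1 !natrM !natrD => nz1 nz2; field.
by rewrite nz1 nz2 !natr_fact_neq0.
Qed.

Lemma beta_nat_bin_sum n a b :
  \sum_(l < n.+1) ('C(n, l))%:R * (-1) ^+ l * beta_nat (a + l) b = beta_nat a (b + n).
Proof.
elim: n a b => [|n IHn] a b; first by rewrite big_ord1 mulr1 mul1r !addn0.
rewrite big_ord_recl /= mulr1 mul1r addn0.
under eq_bigr => i _ do rewrite binS natrD mulrDl mulrDl.
rewrite big_split /=.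
have -> : \sum_(i < n.+1)
      ('C(n, i.+1))%:R * (-1) ^+ (bump 0 i) * beta_nat (a + bump 0 i) b
    = beta_nat a (b + n) - beta_nat a b.
  rewrite -(IHn a b) [in RHS]big_ord_recl /= bin0 expr0 mulr1 mul1r addn0 addrC addKr.
  by rewrite big_ord_recr /= bin_small // !mul0r addr0.
have -> : \sum_(i < n.+1) ('C(n, i))%:R * (-1) ^+ (bump 0 i) * beta_nat (a + bump 0 i) b
    = - beta_nat a.+1 (b + n).
  rewrite -IHn -sumrN; apply: eq_bigr => i _.
  by rewrite /bump /= add1n exprS addnS mulN1r mulrN mulNr.
rewrite addnS -beta_natSl; ring.
Qed.

(* r!/(2r+1)! times the coefficients of the confluent series 1F1(r+1; 2r+2; z) *)
Definition kummer_seq (r l : nat) : R :=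
  ((l + r)`!)%:R / ((l`!)%:R * (((l + 2 * r).+1)`!)%:R).

Lemma kummer_seq_exp_symmetric r : exp_symmetric (kummer_seq r).
Proof.
have nz := natr_fact_neq0 hchar.
move=> n; transitivity (\sum_(l < n.+1)
    ('C(n, l))%:R * (-1) ^+ l * beta_nat (r + l) r / ((r`!)%:R * (n`!)%:R)).
  apply: eq_bigr => l _; have lel : (l <= n)%N by rewrite -ltnS.
  rewrite /dilate /kummer_seq /exp_seq /beta_nat (natr_bin hchar lel) expr1n.
  rewrite (_ : (r + l + r = l + 2 * r)%N) 1?addnC; last by lia.
  by field; rewrite !nz.
rewrite -mulr_suml beta_nat_bin_sum /kummer_seq /beta_nat.
rewrite (_ : (r + (r + n) = n + 2 * r)%N) 1?(addnC r n); last by lia.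
by field; rewrite !nz.
Qed.

(* plays the role of [kummer_seq (-1)] *)
Lemma exp_seq1_delta_exp_symmetric :
  exp_symmetric (fun l => exp_seq 1 l + delta R l).
Proof.
move=> n; rewrite convC
  (eq_conv _ (fun=> erefl) (g' := fun l => exp_seq (-1) l + delta R l)).
  by rewrite convDr (conv_exp_seq hchar) conv_delta subrr exp_seq0 addrC.
move=> l; rewrite /dilate mulrDr -[_ * exp_seq 1 l]/(dilate (-1) (exp_seq 1) l).
by rewrite dilate_exp_seq mulr1; case: l => [|l]; rewrite /delta ?mul1r ?mulr0.
Qed.

End KummerSeries.

Section HalfTangent.
Variable R : fieldType.
Hypothesis hchar : [pchar R] =i pred0.
Variable T : nat -> rat.
Hypothesis hT : tangent_numbers T.

Let ratrR := ratr_pchar0 hchar.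
Let half_dilate (c : nat -> rat) := dilate (2^-1 : R) (fun n => ratr (c n)).

Definition half_tan : nat -> R := half_dilate (tan_series T).

Lemma half_tan_odd k : half_tan (2 * k).+1 =
  (-1) ^+ k * ratr (T (2 * k).+1) / ((((2 * k).+1)`!)%:R * 2 ^+ (2 * k).+1).
Proof.
rewrite /half_tan /half_dilate /dilate /tan_series /= mul2n odd_double uphalf_double.
rewrite !(rmorphM ratrR, fmorphV ratrR, rmorphXn ratrR, rmorphN1 ratrR, rmorph_nat ratrR).
by rewrite exprVn invfM mulrC !mulrA.
Qed.

Lemma exp_symmetric_half_tan_coef M : exp_symmetric M ->
  forall p, M (2 * p).+1 = \sum_(k < p.+1) half_tan (2 * k).+1 * M (2 * (p - k))%N.
Proof.
apply: (exp_symmetric_odd_coef hchar (ch := half_dilate cosh_coef)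
  (sh := half_dilate sinh_coef)) => [n|n|n|n|n].
- by rewrite eqb_id /half_tan /half_dilate /dilate /tan_series => /negbTE->;
    rewrite (rmorph0 ratrR) mulr0.
- by rewrite eqbF_neg negbK /half_dilate /dilate /cosh_coef => ->;
    rewrite (rmorph0 ratrR) mulr0.
- by rewrite eqb_id /half_dilate /dilate /sinh_coef => /negbTE->;
    rewrite (rmorph0 ratrR) mulr0.
- rewrite /half_dilate /dilate -mulrDr /exp_seq /cosh_coef /sinh_coef.
  by case: (odd n);
    rewrite (rmorph0 ratrR) ?addr0 ?add0r (fmorphV ratrR) (rmorph_nat ratrR).
rewrite /half_tan /half_dilate conv_dilate /dilate -(hT n).
rewrite (rmorph_sum ratrR); congr (_ * _).
by apply: eq_bigr => i _; rewrite (rmorphM ratrR).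
Qed.

End HalfTangent.

Lemma sum_triangle_exchange (R : nmodType) n (F : nat -> nat -> R) :
  \sum_(k < n.+1) \sum_(j < (n - k).+1) F k j
  = \sum_(j < n.+1) \sum_(k < (n - j).+1) F k j.
Proof.
have widen a (G : nat -> R) : (a <= n)%N ->
    \sum_(j < (n - a).+1) G j = \sum_(j < n.+1) (if (a + j <= n)%N then G j else 0).
  move=> lean; rewrite (big_ord_widen n.+1 G) ?big_mkcond; last by lia.
  by apply: eq_bigr => j _; rewrite ltnS leq_subRL.
rewrite (eq_bigr _ (fun (k : 'I_n.+1) _ => widen k _ (ltn_ord k))) exchange_big.
apply: eq_bigr => j _; rewrite (widen j (F^~ j)); last exact: ltn_ord j.
by apply: eq_bigr => k _; rewrite addnC.
Qed.

Lemma sum_exchange_odd (R : comRingType) (c : nat -> nat -> R) (W e : nat -> R)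
    (x s : R) n :
  (forall j, (j <= n)%N ->
     c (2 * n).+1 j = \sum_(k < (n - j).+1) W k * c (2 * (n - k))%N j + e j) ->
  \sum_(j < n.+1) c (2 * n).+1 j * (s ^+ j * x ^+ ((2 * n).+1 - 2 * j))
  = \sum_(k < n.+1) W k * x ^+ (2 * k).+1 *
      \sum_(j < (n - k).+1) c (2 * (n - k))%N j * (s ^+ j * x ^+ (2 * (n - k) - 2 * j))
    + \sum_(j < n.+1) e j * (s ^+ j * x ^+ ((2 * n).+1 - 2 * j)).
Proof.
move=> rec_c.
under eq_bigr => j _ do rewrite (rec_c j (ltn_ord j)) mulrDl mulr_suml.
rewrite big_split /= -(sum_triangle_exchange n (fun k j =>
  W k * c (2 * (n - k))%N j * (s ^+ j * x ^+ ((2 * n).+1 - 2 * j)))).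
congr (_ + _).
apply: eq_bigr => k _; rewrite mulr_sumr; apply: eq_bigr => j _.
rewrite (_ : (2 * n).+1 - 2 * j = (2 * k).+1 + (2 * (n - k) - 2 * j))%N.
  by rewrite exprD; ring.
by have := ltn_ord j; have := ltn_ord k; lia.
Qed.

Section VPolynomials.
Variable R : fieldType.
Hypothesis hchar : [pchar R] =i pred0.
Variable T : nat -> rat.
Hypothesis hT : tangent_numbers T.

Let nz := natr_fact_neq0 hchar.
Let two_nz := two_neq0 hchar.

Definition vcoef (N m j : nat) : R :=
  (-1) ^+ j * ((N`!)%:R / ((j`!)%:R * ((N - 2 * j)`!)%:R))
  * (((m + N - j - 1)`!)%:R / ((m + N - 1)`!)%:R) / 2 ^+ (2 * j).

Lemma vpoly_sumE N h x m s : N./2 = h ->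
  vpoly N x m s = \sum_(j < h.+1) vcoef N m j * (s ^+ j * x ^+ (N - 2 * j)).
Proof.
move=> <-; case: N => [|N]; last by apply: eq_bigr => j _; rewrite /vcoef; ring.
rewrite big_ord1 /vcoef /= !(muln0, subn0, addn0, expr0, mul1r, mulr1, divr1).
by rewrite invr1 mul1r divff.
Qed.

Lemma vpoly_oddE n x m s : vpoly (2 * n).+1 x m s =
  \sum_(j < n.+1) vcoef (2 * n).+1 m j * (s ^+ j * x ^+ ((2 * n).+1 - 2 * j)).
Proof. by apply: vpoly_sumE; rewrite /= mul2n uphalf_double. Qed.

Lemma vpoly_evenE n x m s : vpoly (2 * n) x m s =
  \sum_(j < n.+1) vcoef (2 * n) m j * (s ^+ j * x ^+ (2 * n - 2 * j)).
Proof. by apply: vpoly_sumE; rewrite mul2n doubleK. Qed.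

Definition vfactor (m n j : nat) : R :=
  (-1) ^+ j * ((((2 * n).+1)`!)%:R * ((2 * m + 2 * n)`!)%:R)
  / ((j`!)%:R * ((m + 2 * n)`!)%:R * 2 ^+ (2 * j)).

Definition tan_weight (m n k : nat) : R :=
  (-1) ^+ k * ('C((2 * n).+1, (2 * k).+1))%:R
  * (((m + 2 * n - 2 * k - 1)`!)%:R * ((2 * m + 2 * n)`!)%:R
     / (((m + 2 * n)`!)%:R * ((2 * m + 2 * n - 2 * k - 1)`!)%:R))
  * (ratr (T (2 * k).+1) / 2 ^+ (2 * k).+1).

Lemma vcoef_odd_kummer m n j r : (m + j = r.+1)%N -> (j <= n)%N ->
  vcoef (2 * n).+1 m j = vfactor m n j * kummer_seq R r (2 * (n - j)).+1.
Proof.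
move=> mj jn; rewrite /vcoef /vfactor /kummer_seq.
rewrite (_ : (2 * n).+1 - 2 * j = (2 * (n - j)).+1)%N; last by lia.
rewrite (_ : m + (2 * n).+1 - j - 1 = (2 * (n - j)).+1 + r)%N; last by lia.
rewrite (_ : m + (2 * n).+1 - 1 = m + 2 * n)%N; last by lia.
rewrite (_ : ((2 * (n - j)).+1 + 2 * r).+1 = 2 * m + 2 * n)%N; last by lia.
by field; rewrite !nz !expf_neq0.
Qed.

Lemma tan_weight_vcoef_kummer m n j k r : (m + j = r.+1)%N -> (j + k <= n)%N ->
  tan_weight m n k * vcoef (2 * (n - k)) m j
  = vfactor m n j * (half_tan R T (2 * k).+1 * kummer_seq R r (2 * (n - j - k))).
Proof.
move=> mj jkn; rewrite (half_tan_odd hchar) /tan_weight /vcoef /vfactor /kummer_seq.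
rewrite natr_bin //; last by lia.
rewrite (_ : (2 * n).+1 - (2 * k).+1 = 2 * (n - k))%N; last by lia.
rewrite (_ : m + 2 * (n - k) - j - 1 = 2 * (n - j - k) + r)%N; last by lia.
rewrite (_ : m + 2 * (n - k) - 1 = m + 2 * n - 2 * k - 1)%N; last by lia.
rewrite (_ : (2 * (n - j - k) + 2 * r).+1 = 2 * m + 2 * n - 2 * k - 1)%N; last by lia.
rewrite (_ : 2 * (n - k) - 2 * j = 2 * (n - j - k))%N; last by lia.
by field; rewrite !nz !expf_neq0.
Qed.

Lemma vcoef_odd_recursion m n j : (0 < m + j)%N -> (j <= n)%N ->
  vcoef (2 * n).+1 m j
  = \sum_(k < (n - j).+1) tan_weight m n k * vcoef (2 * (n - k)) m j.
Proof.
move=> mj_gt0 jn; have [r mj] : exists r, (m + j = r.+1)%N by exists (m + j).-1; lia.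
rewrite (vcoef_odd_kummer mj jn) (exp_symmetric_half_tan_coef hchar hT
  (kummer_seq_exp_symmetric hchar r)) mulr_sumr.
apply: eq_bigr => k _; rewrite (tan_weight_vcoef_kummer mj) //.
by have := ltn_ord k; lia.
Qed.

Lemma vcoef00 N : vcoef N 0 0 = 1.
Proof.
by rewrite /vcoef !(muln0, subn0, add0n, expr0, mul1r, mulr1, divr1) !divff ?mulr1.
Qed.

Lemma tan_weight0_half_tan n k : (k <= n)%N ->
  tan_weight 0 n k = (((2 * n).+1)`!)%:R * half_tan R T (2 * k).+1
                     * exp_seq 1 (2 * (n - k)).
Proof.
move=> kn; rewrite (half_tan_odd hchar) /tan_weight /exp_seq expr1n.
rewrite natr_bin //; last by lia.
rewrite (_ : (2 * n).+1 - (2 * k).+1 = 2 * (n - k))%N; last by lia.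
by rewrite !(muln0, add0n); field; rewrite !nz !expf_neq0.
Qed.

Lemma vcoef00_odd_recursion n :
  vcoef (2 * n).+1 0 0
  = \sum_(k < n.+1) tan_weight 0 n k * vcoef (2 * (n - k)) 0 0
    + (-1) ^+ n * (ratr (T (2 * n).+1) / 2 ^+ (2 * n).+1).
Proof.
have delta_sum : \sum_(k < n.+1) half_tan R T (2 * k).+1 * delta R (2 * (n - k))
    = half_tan R T (2 * n).+1.
  rewrite big_ord_recr /= subnn mulr1 big1 ?add0r // => k _.
  rewrite /delta (_ : 2 * (n - k) == 0 = false)%N ?mulr0 //.
  by apply/negbTE; have := ltn_ord k; lia.
have := exp_symmetric_half_tan_coef hchar hT (exp_seq1_delta_exp_symmetric hchar) n.
under eq_bigr do rewrite mulrDr.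
rewrite big_split /= delta_sum (_ : delta R (2 * n).+1 = 0) ?addr0 // => exp_odd.
rewrite vcoef00.
under eq_bigr => k _ do rewrite vcoef00 mulr1 (@tan_weight0_half_tan n k (ltn_ord k)).
under eq_bigr do rewrite -mulrA.
rewrite -mulr_sumr
  (_ : \sum_(k < n.+1) _ = exp_seq 1 (2 * n).+1 - half_tan R T (2 * n).+1).
  by rewrite (half_tan_odd hchar) /exp_seq expr1n; field; rewrite !nz !expf_neq0.
by rewrite exp_odd addrK.
Qed.

Lemma tan_weight0E n k : tan_weight 0 n k =
  (-1) ^+ k * ('C((2 * n).+1, (2 * k).+1))%:R * (ratr (T (2 * k).+1) / 2 ^+ (2 * k).+1).
Proof. by rewrite /tan_weight !(muln0, add0n); field; rewrite !nz !expf_neq0. Qed.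

Lemma vpoly_odd_recursion (x s : R) m n (e : nat -> R) :
  (forall j, (j <= n)%N -> vcoef (2 * n).+1 m j
     = \sum_(k < (n - j).+1) tan_weight m n k * vcoef (2 * (n - k)) m j + e j) ->
  vpoly (2 * n).+1 x m s
  = \sum_(k < n.+1) tan_weight m n k * x ^+ (2 * k).+1 * vpoly (2 * n - 2 * k) x m s
    + \sum_(j < n.+1) e j * (s ^+ j * x ^+ ((2 * n).+1 - 2 * j)).
Proof.
move=> rec_vcoef; rewrite vpoly_oddE.
rewrite (@sum_exchange_odd _ (fun N j => vcoef N m j) _ _ x s n rec_vcoef).
by congr (_ + _); apply: eq_bigr => k _; rewrite -mulnBr vpoly_evenE.
Qed.

Lemma vpoly_odd_m_gt0 (x s : R) m n : (0 < m)%N ->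
  vpoly (2 * n).+1 x m s
  = \sum_(k < n.+1) tan_weight m n k * x ^+ (2 * k).+1 * vpoly (2 * n - 2 * k) x m s.
Proof.
move=> m_gt0; rewrite (@vpoly_odd_recursion _ _ _ _ (fun=> 0)) => [|j jn].
  by rewrite [X in _ + X]big1 ?addr0 // => j _; rewrite mul0r.
by rewrite addr0 vcoef_odd_recursion //; lia.
Qed.

Lemma vpoly_odd_m0 (x s : R) n :
  vpoly (2 * n).+1 x 0 s
  = \sum_(k < n) (-1) ^+ k * ('C((2 * n).+1, (2 * k).+1))%:R
        * (ratr (T (2 * k).+1) / 2 ^+ (2 * k).+1) * x ^+ (2 * k).+1
        * vpoly (2 * n - 2 * k) x 0 s
    + (-1) ^+ n * (ratr (T (2 * n).+1) / 2 ^+ (2 * n)) * x ^+ (2 * n).+1.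
Proof.
pose c : R := (-1) ^+ n * (ratr (T (2 * n).+1) / 2 ^+ (2 * n).+1).
rewrite (@vpoly_odd_recursion _ _ _ _ (fun j => if j == 0%N then c else 0)).
  rewrite [X in _ + X]big_ord_recl [X in _ + (_ + X)]big1 => [|j _]; last first.
    by rewrite mul0r.
  rewrite big_ord_recr /= subnn !muln0 subn0 !expr0 mul1r !addr0 -addrA.
  congr (_ + _); first by apply: eq_bigr => k _; rewrite tan_weight0E.
  rewrite tan_weight0E binn /c !mulr1 -mulrDl; congr (_ * _).
  by rewrite exprS; field; rewrite expf_neq0.
case=> [|j] jn; first by rewrite vcoef00_odd_recursion subn0.
by rewrite addr0 vcoef_odd_recursion.
Qed.

End VPolynomials.

Theorem mainTheorem16 (R : fieldType) (hchar : [pchar R] =i pred0)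
  (T : nat -> rat) (hT : tangent_numbers T) (x s : R) :
  (forall m n : nat, (1 <= m)%N ->
     vpoly (2 * n).+1 x m s =
     \sum_(k < n.+1)
       (-1) ^+ k * ('C((2 * n).+1, (2 * k).+1))%:R
       * (((m + 2 * n - 2 * k - 1)`!)%:R * ((2 * m + 2 * n)`!)%:R
          / (((m + 2 * n)`!)%:R * ((2 * m + 2 * n - 2 * k - 1)`!)%:R))
       * (ratr (T (2 * k).+1) / 2 ^+ (2 * k).+1)
       * x ^+ (2 * k).+1 * vpoly (2 * n - 2 * k) x m s)
  /\
  (forall n : nat,
     vpoly (2 * n).+1 x 0 s =
     \sum_(k < n)
       (-1) ^+ k * ('C((2 * n).+1, (2 * k).+1))%:R
       * (ratr (T (2 * k).+1) / 2 ^+ (2 * k).+1)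
       * x ^+ (2 * k).+1 * vpoly (2 * n - 2 * k) x 0 s
     + (-1) ^+ n * (ratr (T (2 * n).+1) / 2 ^+ (2 * n))
       * x ^+ (2 * n).+1).
Proof.
split; last exact: vpoly_odd_m0.
by move=> m n m_gt0; rewrite (vpoly_odd_m_gt0 hchar hT).
Qed.
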